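(* Let $n\in\mathbb{N}$ and $1\le t\le 2^n$. Let $T$ be a uniformly random subset of $\mathbb{F}_2^n$ of size $|T|=t$, and let $k$ be a uniformly random element of $T$. For $0\le d\le n$ let $\#_d(k)=|\{z\in T:d_H(z,k)=d\}|$, with $d_H$ the Hamming distance. Then for all integers $x$, $$P(\#_d(k)=x)=\begin{cases}1 & d=0\wedge x=1,\\ 0 & d=0\wedge x\ne1,\\ \mathrm{hypgeom}(\mathbf X,\mathbf x) & \text{otherwise},\end{cases}$$ with $\mathbf X=\left(\binom nd,\,2^n-1-\binom nd\right)$ and $\mathbf x=(x,\,|T|-1-x)$. Moreover, for $0\le d_1,d_2\le n$ and integers $x_1,x_2$, $$P(\#_{d_1}(k)=x_1,\#_{d_2}(k)=x_2)=\begin{cases}P(\#_{d_1}(k)=x_1)P(\#_{d_2}(k)=x_2) & d_1=0\vee d_2=0,\\ P(\#_{d_1}(k)=x_1) & d_1=d_2\wedge x_1=x_2,\\ 0 & d_1=d_2\wedge x_1\ne x_2,\\ \mathrm{hypgeom}(\mathbf X,\mathbf x) & \text{otherwise},\end{cases}$$ with $\mathbf X=\left(\binom n{d_1},\binom n{d_2},\,2^n-1-\binom n{d_1}-\binom n{d_2}\right)$ and $\mathbf x=(x_1,x_2,\,|T|-1-x_1-x_2)$.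
   Context: $\mathrm{hypgeom}(\mathbf X,\mathbf x)$ is the multivariate hypergeometric probability: for an urn with $X_i$ balls of colour $i$ ($i=1,\dots,m$), $N=\sum_iX_i$, drawing $s=\sum_ix_i$ balls without replacement, the probability of obtaining exactly $x_i$ balls of colour $i$ for all $i$ is $\prod_{i=1}^m\binom{X_i}{x_i}\big/\binom{N}{s}$ (taken to be $0$ when some $x_i<0$). *)

From HB Require Import structures.
From mathcomp Require Import all_boot all_order all_algebra.
Set Implicit Arguments. Unset Strict Implicit. Unset Printing Implicit Defensive.
Import Order.TTheory GRing.Theory Num.Theory.
Local Open Scope ring_scope.

Notation F2n n := 'rV['F_2]_n.

Definition dH (n : nat) (z k : F2n n) : nat :=
  #|[set i : 'I_n | z ord0 i != k ord0 i]|.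

Definition countd (n : nat) (T : {set F2n n}) (k : F2n n) (d : nat) : nat :=
  #|[set z in T | dH z k == d]|.

Definition hypgeom (X : seq nat) (x : seq int) : rat :=
  if has (fun v : int => v < 0) x then 0
  else (\prod_(p <- zip X x) ('C(p.1, `|p.2|%N))%:R)
         / ('C(sumn X, sumn (map (fun v : int => `|v|%N) x)))%:R.

(* Probability of an event E(T,k) where T is a uniform random t-subset of
   F_2^n and k is a uniform random element of T. *)
Definition Prob (n t : nat) (E : {set F2n n} -> F2n n -> bool) : rat :=
  \sum_(T : {set F2n n} | #|T| == t)
     (('C(2 ^ n, t))%:R)^-1 * \sum_(k in T) (t%:R)^-1 * (E T k)%:R.
Arguments Prob n t E : clear implicits.

From HB Require Import structures.
From mathcomp Require Import all_boot all_order all_algebra.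
From mathcomp Require Import zify ring.
Import Order.TTheory GRing.Theory Num.Theory.

(* Average over the centre k first.  The t-sets T containing k are k |: S with
   S a (t-1)-subset of ~: [set k], and for d > 0 we have #_d(k) = |S ∩ sphere k d|.
   Spheres of distinct positive radii around k are disjoint subsets of ~: [set k]
   of sizes C(n, d), so the number of S with prescribed intersection sizes is a
   product of binomials that does not depend on k.  Dividing by
   t * C(2^n, t) = 2^n * C(2^n - 1, t - 1) gives the hypergeometric law; the
   case d = 0 is trivial because #_0(k) = 1. *)

Set Implicit Arguments.
Unset Strict Implicit.
Unset Printing Implicit Defensive.

Section SubsetCounting.

Variable T : finType.
Implicit Types (U V A B S : {set T}) (P : pred {set T}) (a b c m : nat).

Lemma card_subsets_offset V c m :
  #|[set S : {set T} | (S \subset V) && (c + #|S| == m)]| =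
  (if c <= m then 'C(#|V|, m - c) else 0).
Proof.
case: leqP => hcm.
  rewrite -cards_draws; apply: eq_card => S; rewrite !inE.
  by case: (S \subset V) => //=; apply/eqP/eqP; lia.
by apply: eq_card0 => S; rewrite !inE; apply/negP => /andP[_ /eqP]; lia.
Qed.

Lemma card_subsets_splitI U A a P :
  #|[set S : {set T} | (S \subset U) && ((#|S :&: A| == a) && P (S :\: A))]| =
  'C(#|U :&: A|, a) * #|[set S : {set T} | (S \subset U :\: A) && P S]|.
Proof.
set L := [set S : {set T} | _].
have split_inj : injective (fun S => (S :&: A, S :\: A)).
  by move=> S1 S2 [e1 e2]; rewrite -(setID S1 A) -(setID S2 A) e1 e2.
rewrite -(card_imset L split_inj) -cards_draws -cardsX.
apply: eq_card => -[S1 S2]; rewrite !inE /=.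
apply/imsetP/idP => [[S] | /andP[/andP[sS1 /eqP cS1] /andP[sS2 PS2]]].
  rewrite !inE => /andP[sSU /andP[cSA PS]] [-> ->].
  by rewrite cSA PS setSI ?setSD.
have sS1A : S1 \subset A by rewrite (subset_trans sS1) ?subsetIr.
move: sS2; rewrite subsetD => /andP[sS2U dS2A].
have S1_part : (S1 :|: S2) :&: A = S1.
  have S2A0 : S2 :&: A = set0 by apply/eqP; rewrite setI_eq0.
  by rewrite setIUl (setIidPl sS1A) S2A0 setU0.
have S2_part : (S1 :|: S2) :\: A = S2.
  have S1A0 : S1 :\: A = set0 by apply/eqP; rewrite setD_eq0.
  by rewrite setDUl S1A0 set0U (setDidPl dS2A).
exists (S1 :|: S2); last by rewrite /= S1_part S2_part.
rewrite !inE S1_part S2_part cS1 eqxx PS2 subUset sS2U !andbT.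
by rewrite (subset_trans sS1) ?subsetIl.
Qed.

Lemma card_subsets_meet1 U A a c m :
  #|[set S : {set T} | (S \subset U) && ((#|S :&: A| == a) && (c + #|S| == m))]| =
  'C(#|U :&: A|, a) * (if c + a <= m then 'C(#|U :\: A|, m - (c + a)) else 0).
Proof.
rewrite -card_subsets_offset -(card_subsets_splitI U A a (fun S => c + a + #|S| == m)).
apply: eq_card => S; rewrite !inE; case: (S \subset U) => //=.
by case: eqP => //= <-; rewrite -addnA cardsID.
Qed.

Lemma card_subsets_meet2 U A B a b c m : [disjoint A & B] ->
  #|[set S : {set T} | (S \subset U) &&
     ((#|S :&: A| == a) && ((#|S :&: B| == b) && (c + #|S| == m)))]| =
  'C(#|U :&: A|, a) * ('C(#|(U :\: A) :&: B|, b) *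
    (if c + a + b <= m then 'C(#|U :\: A :\: B|, m - (c + a + b)) else 0)).
Proof.
rewrite disjoint_sym disjoints_subset => sBA.
rewrite -(card_subsets_meet1 (U :\: A) B b (c + a) m).
rewrite -(card_subsets_splitI U A a (fun S => (#|S :&: B| == b) && (c + a + #|S| == m))).
apply: eq_card => S; rewrite !inE; case: (S \subset U) => //=.
case: eqP => //= <-.
have -> : (S :\: A) :&: B = S :&: B by rewrite setDE -setIA (setIidPr sBA).
by rewrite -addnA cardsID.
Qed.

End SubsetCounting.

Local Open Scope ring_scope.

Lemma hypgeom2 (X1 X2 a m : nat) :
  hypgeom [:: X1; X2] [:: a%:Z; m%:Z - 1 - a%:Z] =
  ('C(X1, a) * (if (1 + a <= m)%N then 'C(X2, m - (1 + a)) else 0))%:R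
    / 'C(X1 + X2, m - 1)%:R.
Proof.
rewrite /hypgeom /=; case: (leqP (1 + a) m) => le_am.
  have -> : m%:Z - 1 - a%:Z = (m - (1 + a))%N by lia.
  rewrite !ltz_nat /= !big_cons big_nil mulr1 natrM addn0.
  by have -> : (a + (m - (1 + a) + 0) = m - 1)%N by lia.
have -> : (m%:Z - 1 - a%:Z < 0) = true by lia.
by rewrite muln0 mul0r.
Qed.

Lemma hypgeom3 (X1 X2 X3 a b m : nat) :
  hypgeom [:: X1; X2; X3] [:: a%:Z; b%:Z; m%:Z - 1 - a%:Z - b%:Z] =
  ('C(X1, a) * ('C(X2, b) *
    (if (1 + a + b <= m)%N then 'C(X3, m - (1 + a + b)) else 0)))%:R
    / 'C(X1 + X2 + X3, m - 1)%:R.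
Proof.
rewrite /hypgeom /=; case: (leqP (1 + a + b) m) => le_abm.
  have -> : m%:Z - 1 - a%:Z - b%:Z = (m - (1 + a + b))%N by lia.
  rewrite !ltz_nat /= !big_cons big_nil mulr1 !natrM mulrA addn0 addnA.
  by have -> : (a + (b + (m - (1 + a + b) + 0)) = m - 1)%N by lia.
have -> : (m%:Z - 1 - a%:Z - b%:Z < 0) = true by lia.
by rewrite !muln0 mul0r.
Qed.

Lemma F2_neq0 (x : 'F_2) : x != 0 -> x = 1.
Proof. by case: x => [[|[|m]] //= lt_m2] _; apply: val_inj. Qed.

Definition sphere n (k : F2n n) d := [set z : F2n n | dH z k == d].

Lemma card_sphere n (k : F2n n) d : #|sphere k d| = 'C(n, d).
Proof.
pose supp (z : F2n n) := [set i : 'I_n | z ord0 i != k ord0 i].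
pose flip (D : {set 'I_n}) : F2n n := \row_i (k ord0 i + (i \in D)%:R).
have suppK : cancel supp flip.
  move=> z; apply/rowP => i; rewrite mxE inE.
  have [-> | neq_zk] := eqVneq (z ord0 i) (k ord0 i); first by rewrite addr0.
  by rewrite -[RHS](subrK (k ord0 i)) addrC (@F2_neq0 (_ - _)) ?subr_eq0.
have flipK : cancel flip supp.
  move=> D; apply/setP => i; rewrite inE mxE.
  by case: (i \in D); rewrite ?addr0 ?eqxx // -subr_eq0 addrAC subrr add0r oner_neq0.
have -> : sphere k d = supp @^-1: [set D : {set 'I_n} | #|D| == d].
  by apply/setP => z; rewrite !inE.
rewrite -(can2_imset_pre _ flipK suppK) card_imset; last exact: can_inj flipK.
by rewrite card_draws card_ord.
Qed.

Lemma dH_eq0 n (z k : F2n n) : (dH z k == 0%N) = (z == k).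
Proof.
rewrite cards_eq0; apply/eqP/eqP => [/setP supp0 | ->].
  apply/rowP => i; apply/eqP; move: (supp0 i); rewrite !inE.
  by rewrite [ord0]ord1 => /negbFE.
by apply/setP => i; rewrite !inE eqxx.
Qed.

Lemma countdE n (T : {set F2n n}) k d : countd T k d = #|T :&: sphere k d|.
Proof. by rewrite /countd setIdE. Qed.

Lemma countd0 n (T : {set F2n n}) k : k \in T -> countd T k 0 = 1%N.
Proof.
rewrite countdE.
have -> : sphere k 0 = [set k] by apply/setP => z; rewrite !inE dH_eq0.
by move=> kT; rewrite (setIidPr _) ?sub1set ?cards1.
Qed.

Lemma sphere_subC1 n (k : F2n n) d : (0 < d)%N -> sphere k d \subset ~: [set k].
Proof.
by move=> d_gt0; apply/subsetP => z; rewrite !inE -dH_eq0 => /eqP->; rewrite -lt0n.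
Qed.

Lemma countd_sphere n (T : {set F2n n}) k d : (0 < d)%N ->
  countd T k d = #|(T :\ k) :&: sphere k d|.
Proof. by move=> d_gt0; rewrite countdE setDE -setIA (setIidPr (sphere_subC1 k d_gt0)). Qed.

Lemma disjoint_sphere n (k : F2n n) d1 d2 : d1 != d2 ->
  [disjoint sphere k d1 & sphere k d2].
Proof.
move=> neq_d; rewrite -setI_eq0; apply/eqP/setP => z; rewrite !inE.
by apply: contraNF neq_d => /andP[/eqP <- /eqP <-].
Qed.

Lemma card_F2n n : #|{: F2n n}| = (2 ^ n)%N.
Proof. by rewrite card_mx card_Fp // mul1n. Qed.

Lemma cardsC1_F2n n (k : F2n n) : #|~: [set k]| = (2 ^ n - 1)%N.
Proof. by rewrite cardsC1 card_F2n subn1. Qed.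

Lemma bin_le_pred_exp2 n d : (0 < d)%N -> ('C(n, d) <= 2 ^ n - 1)%N.
Proof.
move=> d_gt0; rewrite -(card_sphere (0 : F2n n) d) -(cardsC1_F2n (0 : F2n n)).
exact/subset_leq_card/sphere_subC1.
Qed.

Lemma binD_le_pred_exp2 n d1 d2 : (0 < d1)%N -> (0 < d2)%N -> d1 != d2 ->
  ('C(n, d1) + 'C(n, d2) <= 2 ^ n - 1)%N.
Proof.
move=> d1_gt0 d2_gt0 neq_d; pose k : F2n n := 0.
rewrite -(card_sphere k d1) -(card_sphere k d2) -(cardsC1_F2n k).
have sub_U : sphere k d1 :|: sphere k d2 \subset ~: [set k].
  by rewrite subUset !sphere_subC1.
move: (subset_leq_card sub_U).
by rewrite cardsU (disjoint_setI0 (disjoint_sphere k neq_d)) cards0 subn0.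
Qed.

Section UniformSetAndElement.

Variables n t : nat.
Hypotheses (t_gt0 : (0 < t)%N) (t_le : (t <= 2 ^ n)%N).
Implicit Types (E : {set F2n n} -> F2n n -> bool) (T : {set F2n n}) (k : F2n n).

Definition fibre E k :=
  [set T : {set F2n n} | (k \in T) && ((#|T| == t) && E T k)].

Lemma eq_Prob E E' : (forall T k, k \in T -> E T k = E' T k) -> Prob n t E = Prob n t E'.
Proof.
move=> eqE; apply: eq_bigr => T _; congr (_ * _).
by apply: eq_bigr => k kT; rewrite eqE.
Qed.

Lemma Prob0 : Prob n t (fun _ _ => false) = 0.
Proof. by rewrite /Prob big1 // => T _; rewrite big1 ?mulr0 // => k _; rewrite mulr0. Qed.

Lemma Prob_andbl (b : bool) E : Prob n t (fun T k => b && E T k) = b%:R * Prob n t E.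
Proof. by case: b; rewrite ?mul1r ?mul0r ?Prob0. Qed.

Lemma Prob_fibres E :
  Prob n t E = ('C(2 ^ n, t)%:R)^-1 * ((t%:R)^-1 * (\sum_k #|fibre E k|)%:R).
Proof.
rewrite /Prob -mulr_sumr; under [in LHS]eq_bigr => T _ do rewrite -mulr_sumr.
rewrite -mulr_sumr natr_sum; congr (_ * (_ * _)).
under [in RHS]eq_bigr => k _ do rewrite -sum1_card natr_sum big_mkcond.
rewrite [RHS]exchange_big /= big_mkcond /=; apply: eq_bigr => T _.
under [in RHS]eq_bigr => k _ do rewrite inE.
case: (#|T| == t); last by rewrite big1 // => k _; case: (k \in T).
by rewrite big_mkcond; apply: eq_bigr => k _; case: (k \in T); case: (E T k).
Qed.

Lemma Prob_const_fibres E V :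
  (forall k, #|fibre E k| = V) -> Prob n t E = V%:R / 'C(2 ^ n - 1, t - 1)%:R.
Proof.
move=> fibreE.
rewrite Prob_fibres (eq_bigr (fun=> V)) // sum_nat_const card_F2n.
have binE : (2 ^ n * 'C(2 ^ n - 1, t - 1) = t * 'C(2 ^ n, t))%N.
  by rewrite !subn1 mul_bin_diag prednK.
have nz_C : 'C(2 ^ n, t)%:R != 0 :> rat by rewrite pnatr_eq0 -lt0n bin_gt0.
have nz_C' : 'C(2 ^ n - 1, t - 1)%:R != 0 :> rat by rewrite pnatr_eq0 -lt0n bin_gt0; lia.
have nz_t : t%:R != 0 :> rat by rewrite pnatr_eq0 -lt0n.
rewrite natrM -[(2 ^ n)%:R](mulfK nz_C') -natrM binE natrM.
by field; rewrite nz_C nz_C' nz_t.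
Qed.

Lemma card_fibre E k (P : pred {set F2n n}) :
  (forall T, k \in T -> (#|T| == t) && E T k = P (T :\ k)) ->
  #|fibre E k| = #|[set S : {set F2n n} | (S \subset ~: [set k]) && P S]|.
Proof.
move=> PE; have := card_subsets_splitI setT [set k] 1 P.
rewrite setTI cards1 bin1 mul1n setTD => <-; apply: eq_card => T; rewrite !inE subsetT /=.
have [kT | kNT] := boolP (k \in T).
  by rewrite (setIidPr _) ?sub1set // cards1 eqxx PE.
by rewrite (disjoint_setI0 _) ?cards0 // disjoint_sym disjoints1.
Qed.

Lemma Prob1 : Prob n t (fun _ _ => true) = 1.
Proof.
rewrite (@Prob_const_fibres _ 'C(2 ^ n - 1, t - 1)) ?divff // => [|k].
  by rewrite pnatr_eq0 -lt0n bin_gt0; lia.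
rewrite (@card_fibre _ k (fun S => 1 + #|S| == t)%N).
  by rewrite card_subsets_offset t_gt0 cardsC1_F2n.
by move=> T kT; rewrite andbT (cardsD1 k T) kT.
Qed.

Lemma Prob_countd0 (x : int) : Prob n t (fun T k => (countd T k 0)%:Z == x) = (x == 1)%:R.
Proof.
have := Prob_andbl (x == 1) (fun _ _ => true).
rewrite Prob1 mulr1 => <-; apply: eq_Prob => T k kT.
by rewrite countd0 // andbT eq_sym.
Qed.

Lemma Prob_countd0_andl (x : int) E :
  Prob n t (fun T k => ((countd T k 0)%:Z == x) && E T k) =
  Prob n t (fun T k => (countd T k 0)%:Z == x) * Prob n t E.
Proof.
rewrite Prob_countd0 -Prob_andbl; apply: eq_Prob => T k kT.
by rewrite countd0 // eq_sym.
Qed.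

Lemma card_fibre_countd d a k : (0 < d)%N ->
  #|fibre (fun T k => countd T k d == a) k| =
  ('C('C(n, d), a) *
    (if (1 + a <= t)%N then 'C(2 ^ n - 1 - 'C(n, d), t - (1 + a)) else 0))%N.
Proof.
move=> d_gt0; have sub_d := sphere_subC1 k d_gt0.
rewrite (@card_fibre _ k (fun S => (#|S :&: sphere k d| == a) && (1 + #|S| == t))%N).
  rewrite card_subsets_meet1 (setIidPr sub_d) cardsD (setIidPr sub_d).
  by rewrite cardsC1_F2n card_sphere.
by move=> T kT; rewrite (cardsD1 k T) kT countd_sphere // andbC.
Qed.

Lemma card_fibre_countd2 d1 d2 a b k : (0 < d1)%N -> (0 < d2)%N -> d1 != d2 ->
  #|fibre (fun T k => (countd T k d1 == a) && (countd T k d2 == b)) k| =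
  ('C('C(n, d1), a) * ('C('C(n, d2), b) *
    (if (1 + a + b <= t)%N
     then 'C(2 ^ n - 1 - 'C(n, d1) - 'C(n, d2), t - (1 + a + b)) else 0)))%N.
Proof.
move=> d1_gt0 d2_gt0 neq_d.
have sub1 := sphere_subC1 k d1_gt0.
have sub2 : sphere k d2 \subset ~: [set k] :\: sphere k d1.
  by rewrite subsetD sphere_subC1 // disjoint_sym disjoint_sphere.
rewrite (@card_fibre _ k (fun S => (#|S :&: sphere k d1| == a) &&
    ((#|S :&: sphere k d2| == b) && (1 + #|S| == t)))%N).
  rewrite card_subsets_meet2 ?disjoint_sphere // (setIidPr sub1) (setIidPr sub2).
  rewrite cardsD (setIidPr sub2) cardsD (setIidPr sub1).
  by rewrite cardsC1_F2n !card_sphere.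
by move=> T kT; rewrite (cardsD1 k T) kT !countd_sphere // andbC -andbA.
Qed.

Lemma Prob_countd d (x : int) : (0 < d)%N ->
  Prob n t (fun T k => (countd T k d)%:Z == x) =
  hypgeom [:: 'C(n, d); (2 ^ n - 1 - 'C(n, d))%N] [:: x; t%:Z - 1 - x].
Proof.
move=> d_gt0; case: x => [a | m]; last first.
  by rewrite (eq_Prob (E' := fun _ _ => false)) ?Prob0.
rewrite (eq_Prob (E' := fun T k => countd T k d == a)) => [|T k _]; last first.
  by rewrite eqz_nat.
rewrite (Prob_const_fibres (fun k => card_fibre_countd a k d_gt0)) hypgeom2.
by rewrite subnKC // bin_le_pred_exp2.
Qed.

Lemma Prob_countd2 d1 d2 (x1 x2 : int) : (0 < d1)%N -> (0 < d2)%N -> d1 != d2 ->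
  Prob n t (fun T k => ((countd T k d1)%:Z == x1) && ((countd T k d2)%:Z == x2)) =
  hypgeom [:: 'C(n, d1); 'C(n, d2); (2 ^ n - 1 - 'C(n, d1) - 'C(n, d2))%N]
          [:: x1; x2; t%:Z - 1 - x1 - x2].
Proof.
move=> d1_gt0 d2_gt0 neq_d; case: x1 => [a | m1]; last first.
  by rewrite (eq_Prob (E' := fun _ _ => false)) ?Prob0.
case: x2 => [b | m2]; last first.
  by rewrite (eq_Prob (E' := fun _ _ => false)) ?Prob0 // => T k _; rewrite andbF.
rewrite (eq_Prob (E' := fun T k => (countd T k d1 == a) && (countd T k d2 == b)));
  last by move=> T k _; rewrite !eqz_nat.
rewrite (Prob_const_fibres (fun k => card_fibre_countd2 a b k d1_gt0 d2_gt0 neq_d)).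
by rewrite hypgeom3 -subnDA subnKC // binD_le_pred_exp2.
Qed.

End UniformSetAndElement.

Theorem lemma3 (n t : nat) (ht1 : (1 <= t)%N) (ht2 : (t <= 2 ^ n)%N) :
  (forall (d : nat) (x : int), (d <= n)%N ->
     Prob n t (fun T k => (countd T k d)%:Z == x) =
     (if d == 0%N then (if x == 1 then 1 else 0)
      else hypgeom [:: 'C(n, d); (2 ^ n - 1 - 'C(n, d))%N]
                   [:: x; t%:Z - 1 - x]))
  /\
  (forall (d1 d2 : nat) (x1 x2 : int), (d1 <= n)%N -> (d2 <= n)%N ->
     Prob n t (fun T k => ((countd T k d1)%:Z == x1) && ((countd T k d2)%:Z == x2)) =
     (if (d1 == 0%N) || (d2 == 0%N) then
        Prob n t (fun T k => (countd T k d1)%:Z == x1) *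
        Prob n t (fun T k => (countd T k d2)%:Z == x2)
      else if d1 == d2 then
        (if x1 == x2 then Prob n t (fun T k => (countd T k d1)%:Z == x1) else 0)
      else hypgeom [:: 'C(n, d1); 'C(n, d2); (2 ^ n - 1 - 'C(n, d1) - 'C(n, d2))%N]
                   [:: x1; x2; t%:Z - 1 - x1 - x2])).
Proof.
split=> [d x _ | d1 d2 x1 x2 _ _].
  have [-> | d_neq0] := eqVneq d 0%N; first by rewrite Prob_countd0 //; case: (x == 1).
  by rewrite Prob_countd // lt0n.
have [-> | d1_neq0] := eqVneq d1 0%N; first by rewrite Prob_countd0_andl.
have [-> | d2_neq0] := eqVneq d2 0%N.
  by rewrite mulrC -Prob_countd0_andl //; apply: eq_Prob => T k _; rewrite andbC.
rewrite /=; have [<- | neq_d] := eqVneq d1 d2.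
  have [<- | neq_x] := eqVneq x1 x2; first by apply: eq_Prob => T k _; rewrite andbb.
  rewrite (@eq_Prob n t _ (fun _ _ => false)) ?Prob0 // => T k _.
  by apply/negbTE/andP => -[/eqP-> /eqP eq_x]; rewrite eq_x eqxx in neq_x.
by rewrite Prob_countd2 // lt0n.
Qed.
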